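(* Assume the block-sparse setting described in the context, with adversarial noise satisfying $\|w\|_2\le\varepsilon$ for a known constant $\varepsilon>0$, and assume $x\neq 0$. Suppose that $$(1-(d-1)\nu)\,x_{\min} > 2\varepsilon\sqrt{1+(d-1)\nu} + (2k-1)\,d\,\mu_B\,x_{\max}.$$ Then the block-thresholding (BTH) estimate satisfies $S\subseteq \hat S$ (i.e., BTH identifies all elements of the support of $x$), and $$\|\hat x_{\mathrm{BTH}}-x\|_2^2 \le \frac{\varepsilon^2}{1-(d-1)\nu-(k-1)d\mu_B}.$$
   Context: Setting: $N=Md$. For $v\in\mathbb{C}^N$, $v[i]=(v_{(i-1)d+1},\dots,v_{id})^T$ is its $i$-th block ($1\le i\le M$); for a matrix $A$ with $N$ columns, $A[i]$ is the submatrix of columns $(i-1)d+1,\dots,id$. The (block) support is $\mathrm{supp}(v)=\{i: v[i]\neq 0\}$. For an index set $I=\{i_1<\dots<i_p\}$, $v_I$ is the concatenation of the blocks $v[i_1],\dots,v[i_p]$ and $A_I=[A[i_1],\dots,A[i_p]]$. The unknown deterministic vector $x\in\mathbb{C}^N$ has at most $k$ nonzero blocks (with $k$ known); $S=\mathrm{supp}(x)$, $s=|S|$, $x_{\max}=\max_{i\in S}\|x[i]\|_2$, $x_{\min}=\min_{i\in S}\|x[i]\|_2$. Observations are $y=Dx+w$ where $D\in\mathbb{C}^{L\times N}$ is known with columns $d_1,\dots,d_N$ of unit $\ell_2$ norm, $L<N$, and $D_I$ has full column rank for every index set $I$ with $|I|\le k$. Block coherence: $\mu_B=\max_{i\neq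 j}\frac1d\|D[i]^*D[j]\|$ (spectral norm). Sub-coherence: $\nu=\max_{1\le \ell\le M}\max_{(\ell-1)d+1\le i\neq j\le \ell d}|d_i^*d_j|$. BTH algorithm: compute $\rho_i=\|D[i]^*y\|_2$ for $i=1,\dots,M$; choose a set $\hat S$ of $k$ indices with $\rho_i\ge\rho_j$ for all $i\in\hat S$, $j\notin\hat S$ (ties broken arbitrarily); output $\hat x_{\mathrm{BTH}}$ defined by $(\hat x_{\mathrm{BTH}})_{\hat S}=D_{\hat S}^{\dagger}y$ (least squares on the blocks of $\hat S$) and zero on all other blocks. Here $^\dagger$ is the Moore–Penrose pseudoinverse. *)

(* Complex scalars: an arbitrary numClosedFieldType C
   (the abstract "complex numbers" structure of MathComp). *)
From HB Require Import structures.
From mathcomp Require Import all_boot all_order all_algebra.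
Set Implicit Arguments. Unset Strict Implicit. Unset Printing Implicit Defensive.
Import Order.TTheory GRing.Theory Num.Theory.
Local Open Scope ring_scope.

Lemma bidx_proof (m d : nat) (i : 'I_m) (r : 'I_d) : (i * d + r < m * d)%N.
Proof.
apply: (@leq_trans (i.+1 * d)); first by rewrite mulSn [(d + _)%N]addnC ltn_add2l.
by rewrite leq_mul2r ltn_ord orbT.
Qed.

(* global index (i-1)d + r of entry r of block i (0-based) *)
Definition bidx (m d : nat) (i : 'I_m) (r : 'I_d) : 'I_(m * d) :=
  Ordinal (bidx_proof i r).

Lemma dpos (m d : nat) (p : 'I_(m * d)) : (0 < d)%N.
Proof. by case: d p => // -[p]; rewrite muln0. Qed.

Lemma blk_of_proof (m d : nat) (p : 'I_(m * d)) : (p %/ d < m)%N.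
Proof. by rewrite ltn_divLR ?(dpos p) // ltn_ord. Qed.

Lemma off_of_proof (m d : nat) (p : 'I_(m * d)) : (p %% d < d)%N.
Proof. exact: ltn_pmod (dpos p). Qed.

Definition blk_of (m d : nat) (p : 'I_(m * d)) : 'I_m := Ordinal (blk_of_proof p).
Definition off_of (m d : nat) (p : 'I_(m * d)) : 'I_d := Ordinal (off_of_proof p).

Section Defs.
Variable C : numClosedFieldType.
Variables (L M d : nat).

Definition adj (m n : nat) (A : 'M[C]_(m, n)) : 'M[C]_(n, m) := (map_mx Num.conj A)^T.

Definition vnorm2 (n : nat) (v : 'cV[C]_n) : C := \sum_i `|v i 0| ^+ 2.
Definition vnorm (n : nat) (v : 'cV[C]_n) : C := sqrtC (vnorm2 v).

Definition blkv (v : 'cV[C]_(M * d)) (i : 'I_M) : 'cV[C]_d :=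
  \col_r v (bidx i r) 0.
Definition blkm (A : 'M[C]_(L, M * d)) (i : 'I_M) : 'M[C]_(L, d) :=
  \matrix_(a, r) A a (bidx i r).

Definition supp (v : 'cV[C]_(M * d)) : {set 'I_M} := [set i | blkv v i != 0].

(* v_I : concatenation of the blocks v[i], i in I, in increasing order of i *)
Definition subv (v : 'cV[C]_(M * d)) (I : {set 'I_M}) : 'cV[C]_(#|I| * d) :=
  \col_p v (bidx (enum_val (blk_of p)) (off_of p)) 0.
(* A_I : concatenation of the column blocks A[i], i in I, increasing order *)
Definition subm (A : 'M[C]_(L, M * d)) (I : {set 'I_M}) : 'M[C]_(L, #|I| * d) :=
  \matrix_(a, p) A a (bidx (enum_val (blk_of p)) (off_of p)).

End Defs.

Definition is_specnorm (C : numClosedFieldType) (m n : nat) (A : 'M[C]_(m, n)) (c : C) :=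
  (forall v : 'cV[C]_n, vnorm (A *m v) <= c * vnorm v) /\
  (forall c', (forall v : 'cV[C]_n, vnorm (A *m v) <= c' * vnorm v) -> c <= c').

Definition is_pinv (C : numClosedFieldType) (m n : nat)
  (A : 'M[C]_(m, n)) (P : 'M[C]_(n, m)) :=
  [/\ A *m P *m A = A, P *m A *m P = P,
      adj (A *m P) = A *m P & adj (P *m A) = P *m A].

(* block coherence mu_B = max_{i <> j} (1/d) ||D[i]^* D[j]||  (0 if M <= 1) *)
Definition block_coherence (C : numClosedFieldType) (L M d : nat)
  (D : 'M[C]_(L, M * d)) (muB : C) :=
  exists nr : 'I_M -> 'I_M -> C,
    (forall i j, is_specnorm (adj (blkm D i) *m blkm D j) (nr i j)) /\
    muB = \big[Num.max/0]_(i : 'I_M) \big[Num.max/0]_(j : 'I_M | j != i)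
            (nr i j / d%:R).

(* sub-coherence nu = max over blocks l, and distinct columns r1 <> r2 of
   block l, of |d_{r1}^* d_{r2}|  (0 if d = 1) *)
Definition subcoherence (C : numClosedFieldType) (L M d : nat)
  (D : 'M[C]_(L, M * d)) : C :=
  \big[Num.max/0]_(l : 'I_M) \big[Num.max/0]_(r1 : 'I_d)
    \big[Num.max/0]_(r2 : 'I_d | r2 != r1)
      `|(adj (col (bidx l r1) D) *m col (bidx l r2) D) 0 0|.

(* x_max = max_{i in S} ||x[i]||,  x_min = min_{i in S} ||x[i]||
   (S nonempty; x_min is computed as a min seeded with x_max, which is
   an upper bound of all the terms) *)
Definition xmax (C : numClosedFieldType) (M d : nat) (x : 'cV[C]_(M * d)) : C :=
  \big[Num.max/0]_(i in supp x) vnorm (blkv x i).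
Definition xmin (C : numClosedFieldType) (M d : nat) (x : 'cV[C]_(M * d)) : C :=
  \big[Num.min/xmax x]_(i in supp x) vnorm (blkv x i).

(* Block thresholding works because the block correlations ||D[j]^* y|| separate the
   support S of x from its complement.  Expanding y = D x + w, for i in S the diagonal
   term D[i]^* D[i] x[i] has norm at least (1 - (d-1) nu) x_min (a Gershgorin bound
   inside one block), every cross term D[j]^* D[l] x[l] with j <> l has norm at most
   d mu_B x_max, and the noise term at most sqrt(1 + (d-1) nu) eps.  So correlations
   on S exceed (1 - (d-1) nu) x_min - (k-1) d mu_B x_max - sqrt(1 + (d-1) nu) eps,
   those off S stay below k d mu_B x_max + sqrt(1 + (d-1) nu) eps, and the recovery
   condition says precisely that the first bound beats the second; as |Shat| = k >= |S|,
   this forces S \subset Shat.  Then xhat - x lives on Shat, where it equals P w with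
   P the pseudoinverse of D_Shat; D_Shat P is an orthogonal projection, so
   ||D_Shat P w|| <= eps, and the Gershgorin bound across blocks,
   ||D_Shat z||^2 >= (1 - (d-1) nu - (k-1) d mu_B) ||z||^2, gives the error estimate. *)

From HB Require Import structures.
From mathcomp Require Import all_boot all_order all_algebra ring.
Set Implicit Arguments. Unset Strict Implicit. Unset Printing Implicit Defensive.
Import Order.TTheory GRing.Theory Num.Theory.
Local Open Scope ring_scope.

Section InnerProduct.
Variable C : numClosedFieldType.
Implicit Types (m n p : nat).

Definition ip n (u v : 'cV[C]_n) : C := (adj u *m v) 0 0.

Lemma ipE n (u v : 'cV[C]_n) : ip u v = \sum_i (u i 0)^* * v i 0.
Proof. by rewrite /ip mxE; apply: eq_bigr => i _; rewrite !mxE. Qed.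

Lemma adjM m n p (A : 'M[C]_(m, n)) (B : 'M[C]_(n, p)) :
  adj (A *m B) = adj B *m adj A.
Proof. by rewrite /adj map_mxM trmx_mul. Qed.

Lemma adjK m n (A : 'M[C]_(m, n)) : adj (adj A) = A.
Proof. by apply/matrixP => i j; rewrite !mxE conjCK. Qed.

Lemma ip_adjr m n (A : 'M[C]_(m, n)) u v : ip u (A *m v) = ip (adj A *m u) v.
Proof. by rewrite /ip adjM adjK mulmxA. Qed.

Lemma ip_adjl m n (A : 'M[C]_(m, n)) u v : ip (A *m u) v = ip u (adj A *m v).
Proof. by rewrite ip_adjr adjK. Qed.

Lemma ipC n (u v : 'cV[C]_n) : ip v u = (ip u v)^*.
Proof.
rewrite !ipE rmorph_sum; apply: eq_bigr => i _.
by rewrite rmorphM /= conjCK mulrC.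
Qed.

Lemma ipBr n (u v w : 'cV[C]_n) : ip u (v - w) = ip u v - ip u w.
Proof. by rewrite /ip mulmxBr [LHS]mxE [X in _ + X]mxE. Qed.

Lemma ipBl n (u v w : 'cV[C]_n) : ip (v - w) u = ip v u - ip w u.
Proof. by rewrite ipC ipBr rmorphB /= -!ipC. Qed.

Lemma ip_sumr n (I : finType) (P : pred I) (u : 'cV[C]_n) F :
  ip u (\sum_(i | P i) F i) = \sum_(i | P i) ip u (F i).
Proof. by rewrite /ip mulmx_sumr summxE. Qed.

Lemma ip_suml n (I : finType) (P : pred I) (u : 'cV[C]_n) F :
  ip (\sum_(i | P i) F i) u = \sum_(i | P i) ip (F i) u.
Proof. by rewrite ipC ip_sumr rmorph_sum; apply: eq_bigr => i _; rewrite /= -ipC. Qed.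

Lemma ipZl n a (u v : 'cV[C]_n) : ip (a *: u) v = a^* * ip u v.
Proof. by rewrite !ipE mulr_sumr; apply: eq_bigr => i _; rewrite mxE rmorphM mulrA. Qed.

Lemma ipZr n a (u v : 'cV[C]_n) : ip u (a *: v) = a * ip u v.
Proof. by rewrite !ipE mulr_sumr; apply: eq_bigr => i _; rewrite mxE mulrCA. Qed.

Lemma ip_dotmx n (u v : 'cV[C]_n) : ip u v = dotmx v^T u^T.
Proof. by rewrite ipE dotmxE mxE; apply: eq_bigr => i _; rewrite !mxE mulrC. Qed.

Lemma vnorm2_ge0 n (v : 'cV[C]_n) : 0 <= vnorm2 v.
Proof. by apply: sumr_ge0 => i _; rewrite exprn_ge0. Qed.

Lemma vnorm_ge0 n (v : 'cV[C]_n) : 0 <= vnorm v.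
Proof. by rewrite sqrtC_ge0 vnorm2_ge0. Qed.

Lemma vnorm_sqr n (v : 'cV[C]_n) : vnorm v ^+ 2 = vnorm2 v.
Proof. exact: sqrtCK. Qed.

Lemma ipvv n (v : 'cV[C]_n) : ip v v = vnorm v ^+ 2.
Proof. by rewrite vnorm_sqr ipE; apply: eq_bigr => i _; rewrite normCK mulrC. Qed.

Lemma vnorm_dotmx n (v : 'cV[C]_n) : vnorm v = sqrtC (dotmx v^T v^T).
Proof. by rewrite -ip_dotmx ipvv sqrtCK. Qed.

Lemma vnorm0 n : vnorm (0 : 'cV[C]_n) = 0.
Proof. by rewrite /vnorm /vnorm2 big1 ?sqrtC0 // => i _; rewrite mxE normr0 expr0n. Qed.

Lemma vnormN n (v : 'cV[C]_n) : vnorm (- v) = vnorm v.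
Proof. by rewrite /vnorm /vnorm2; under eq_bigr do rewrite mxE normrN. Qed.

Lemma norm_ip_le n (u v : 'cV[C]_n) : `|ip u v| <= vnorm u * vnorm v.
Proof.
rewrite ip_dotmx !vnorm_dotmx mulrC.
exact: leif_le (CauchySchwarz_sqrt (dotmx (n := n)) v^T u^T).
Qed.

Lemma vnormD_le n (u v : 'cV[C]_n) : vnorm (u + v) <= vnorm u + vnorm v.
Proof.
rewrite !vnorm_dotmx linearD /=.
exact: leif_le (triangle_lerif (dotmx (n := n)) u^T v^T).
Qed.

Lemma vnorm_sum_le n (I : finType) (P : pred I) (F : I -> 'cV[C]_n) :
  vnorm (\sum_(i | P i) F i) <= \sum_(i | P i) vnorm (F i).
Proof.
elim/big_rec2: _ => [|i y z _ Hz]; first by rewrite vnorm0.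
by apply: le_trans (vnormD_le _ _) _; rewrite lerD2l.
Qed.

Lemma vnormD_ge n (u v : 'cV[C]_n) : vnorm u - vnorm v <= vnorm (u + v).
Proof. by rewrite lerBlDr; have := vnormD_le (u + v) (- v); rewrite addrK vnormN. Qed.

End InnerProduct.

Section OperatorBounds.
Variable C : numClosedFieldType.
Variables m n : nat.
Implicit Types (A : 'M[C]_(m, n)) (z : 'cV[C]_n) (w : 'cV[C]_m).

Lemma adj_vnorm_le A (a : C) : 0 <= a ->
  (forall z, vnorm (A *m z) <= a * vnorm z) ->
  forall w, vnorm (adj A *m w) <= a * vnorm w.
Proof.
move=> a_ge0 A_le w; set u := adj A *m w.
have u_le : vnorm u ^+ 2 <= vnorm u * (a * vnorm w).
  rewrite -ipvv {1}/u -ip_adjr.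
  apply: le_trans (real_ler_norm _) _.
    by rewrite ip_adjr ipvv ger0_real ?exprn_ge0 ?vnorm_ge0.
  apply: le_trans (norm_ip_le _ _) _.
  rewrite mulrC mulrA [vnorm u * a]mulrC.
  by apply: ler_wpM2r; rewrite ?vnorm_ge0.
have [u0|u_neq0] := eqVneq (vnorm u) 0.
  by rewrite u0 mulr_ge0 ?vnorm_ge0.
by move: u_le; rewrite expr2 ler_pM2l // lt_def u_neq0 vnorm_ge0.
Qed.

Lemma gram_vnorm_ge A (b : C) :
  (forall z, b * vnorm z ^+ 2 <= vnorm (A *m z) ^+ 2) ->
  forall z, b * vnorm z <= vnorm (adj A *m A *m z).
Proof.
move=> A_ge z; have z_ge0 := vnorm_ge0 z.
have zb_le : vnorm z * (b * vnorm z) <= vnorm z * vnorm (adj A *m A *m z).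
  rewrite mulrCA -expr2; apply: le_trans (A_ge z) _.
  rewrite -ipvv ip_adjl mulmxA; apply: le_trans (real_ler_norm _) (norm_ip_le _ _).
  by rewrite -mulmxA -ip_adjl ipvv ger0_real ?exprn_ge0 ?vnorm_ge0.
have [z0|z_neq0] := eqVneq (vnorm z) 0; first by rewrite z0 mulr0 vnorm_ge0.
by move: zb_le; rewrite ler_pM2l // lt_def z_neq0 z_ge0.
Qed.

Lemma is_pinv_mulmx_free A (P : 'M[C]_(n, m)) :
  is_pinv A P -> \rank A = n -> P *m A = 1%:M.
Proof.
case=> APA _ _ _ rkA; apply/eqP; rewrite -subr_eq0 -trmx_eq0.
have A_free : row_free A^T by rewrite /row_free mxrank_tr rkA.
by rewrite -(mulmx_free_eq0 _ A_free) -trmx_mul mulmxBr mulmxA APA mulmx1 subrr trmx0.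
Qed.

End OperatorBounds.

Lemma vnorm_proj_le (C : numClosedFieldType) n (Q : 'M[C]_n) (w : 'cV[C]_n) :
  adj Q = Q -> Q *m Q = Q -> vnorm (Q *m w) ^+ 2 <= vnorm w ^+ 2.
Proof.
move=> Q_herm Q_idem.
have QwQw : ip (Q *m w) (Q *m w) = ip w (Q *m w).
  by rewrite ip_adjl Q_herm mulmxA Q_idem.
have Qww : ip (Q *m w) w = ip w (Q *m w) by rewrite ip_adjl Q_herm.
have := exprn_ge0 2 (vnorm_ge0 (w - Q *m w)).
by rewrite -!ipvv ipBl !ipBr QwQw Qww subrr subr0 subr_ge0.
Qed.

Section NonnegBigMaxMin.
Variables (R : numDomainType) (I : finType) (P : pred I) (F : I -> R).
Hypothesis F_ge0 : forall i, P i -> 0 <= F i.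

Lemma bigmax_ge0 (r : seq I) : 0 <= \big[Num.max/0]_(i <- r | P i) F i.
Proof.
elim/big_rec: _ => // i x Pi x_ge0.
by rewrite comparable_le_max ?real_comparable ?ger0_real ?F_ge0 ?x_ge0 ?orbT.
Qed.

Lemma bigmin_ge0 (r : seq I) s : 0 <= s -> 0 <= \big[Num.min/s]_(i <- r | P i) F i.
Proof.
move=> s_ge0; elim/big_rec: _ => // i x Pi x_ge0.
by rewrite comparable_le_min ?real_comparable ?ger0_real ?F_ge0 ?x_ge0.
Qed.

Lemma le_bigmax_nneg i : P i -> F i <= \big[Num.max/0]_(j | P j) F j.
Proof.
move=> Pi; have : i \in index_enum I by rewrite mem_index_enum.
elim: (index_enum I) => // j r IHr; rewrite inE big_cons => /orP[/eqP <-|ir].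
  by rewrite Pi comparable_le_max ?real_comparable ?ger0_real ?F_ge0 ?bigmax_ge0 ?lexx.
case: ifP => Pj; last exact: IHr.
by rewrite comparable_le_max ?real_comparable ?ger0_real ?F_ge0 ?bigmax_ge0 ?IHr ?orbT.
Qed.

Lemma bigmin_le_nneg s i : 0 <= s -> P i -> \big[Num.min/s]_(j | P j) F j <= F i.
Proof.
move=> s_ge0 Pi; have : i \in index_enum I by rewrite mem_index_enum.
elim: (index_enum I) => // j r IHr; rewrite inE big_cons => /orP[/eqP <-|ir].
  by rewrite Pi comparable_ge_min ?real_comparable ?ger0_real ?F_ge0 ?bigmin_ge0 ?lexx.
case: ifP => Pj; last exact: IHr.
by rewrite comparable_ge_min ?real_comparable ?ger0_real ?F_ge0 ?bigmin_ge0 ?IHr ?orbT.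
Qed.

End NonnegBigMaxMin.

Lemma gt0_of_mul_gt0 (R : numDomainType) (a b : R) : 0 <= b -> 0 < a * b -> 0 < a.
Proof.
move=> b_ge0 ab_gt0; have [b0|b_neq0] := eqVneq b 0.
  by move: ab_gt0; rewrite b0 mulr0 ltxx.
by rewrite -(@pmulr_lgt0 _ b) // lt_def b_neq0.
Qed.

Lemma sum_cross_le (R : numDomainType) (T : finType) (A : {pred T}) (b : T -> R) :
  (forall l, 0 <= b l) ->
  \sum_(l in A) \sum_(l' in A | l' != l) b l * b l' <=
  (#|A|.-1)%:R * \sum_(l in A) b l ^+ 2.
Proof.
move=> b_ge0; set S := \sum_(l in A) b l ^+ 2.
have [/card0_eq A0|A_gt0] := posnP #|A|.
  rewrite big_pred0 => [|l]; last by rewrite A0.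
  by rewrite mulr_ge0 ?ler0n ?sumr_ge0 // => l _; rewrite exprn_ge0.
have sum_neq l (g : T -> R) : l \in A ->
    \sum_(l' in A | l' != l) g l' = \sum_(l' in A) g l' - g l.
  by move=> lA; rewrite [X in _ = X - _](bigD1 l) //= addrC addrK.
rewrite -(ler_pM2r (ltr0n R 2)) -subn1 natrB //.
apply: le_trans (_ : \sum_(l in A) \sum_(l' in A | l' != l)
    (b l ^+ 2 + b l' ^+ 2) <= _).
  rewrite mulr_suml; apply: ler_sum => l _; rewrite mulr_suml.
  apply: ler_sum => l' _; rewrite mulr_natr -subr_ge0 addrAC -sqrrB.
  by rewrite -realEsqr rpredB ?ger0_real.
rewrite (eq_bigr (fun l => (#|A|%:R - 1) * b l ^+ 2 + (S - b l ^+ 2))); last first.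
  move=> l lA; rewrite big_split /= sum_neq // sum_neq // sumr_const.
  by rewrite mulrBl mul1r mulr_natl.
rewrite big_split /= -mulr_sumr sumrB sumr_const -/S.
have -> : S *+ #|A| - S = (#|A|%:R - 1) * S by rewrite mulrBl mul1r mulr_natl.
by rewrite mulr_natr mulr2n.
Qed.

Lemma top_set_subset (T : finType) (disp : Order.disp_t) (R : porderType disp)
    (rho : T -> R) (S Shat : {set T}) :
  (#|S| <= #|Shat|)%N ->
  (forall i j, i \in S -> j \notin S -> (rho j < rho i)%O) ->
  (forall i j, i \in Shat -> j \notin Shat -> (rho j <= rho i)%O) ->
  S \subset Shat.
Proof.
move=> S_le S_top Shat_top; apply/subsetP => i iS; apply/negPn/negP => iNShat.
have [j jShat jNS] : exists2 j, j \in Shat & j \notin S.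
  apply/subsetPn/negP => Shat_sub.
  have [Shat_le Shat_eq] := subset_leqif_cards Shat_sub.
  have /eqP ShatS : Shat == S by rewrite -Shat_eq eqn_leq Shat_le S_le.
  by rewrite ShatS iS in iNShat.
by have := lt_le_trans (S_top i j iS jNS) (Shat_top j i jShat iNShat); rewrite ltxx.
Qed.

Section BlockIndex.
Variables m d : nat.

Lemma blk_bidx (i : 'I_m) (r : 'I_d) : blk_of (bidx i r) = i.
Proof.
have d_gt0 : (0 < d)%N by case: d r => [[]|].
by apply: val_inj; rewrite /= divnMDl // divn_small ?addn0.
Qed.

Lemma off_bidx (i : 'I_m) (r : 'I_d) : off_of (bidx i r) = r.
Proof. by apply: val_inj; rewrite /= modnMDl modn_small. Qed.

Lemma bidx_blk_off (p : 'I_(m * d)) : bidx (blk_of p) (off_of p) = p.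
Proof. by apply: val_inj; rewrite /= -divn_eq. Qed.

Lemma sum_blocks (V : nmodType) (F : 'I_(m * d) -> V) :
  \sum_p F p = \sum_(i < m) \sum_(r < d) F (bidx i r).
Proof.
rewrite pair_big (reindex (fun q : 'I_m * 'I_d => bidx q.1 q.2)) //=.
exists (fun p => (blk_of p, off_of p)) => [[i r] _|p _] /=.
  by rewrite blk_bidx off_bidx.
by rewrite bidx_blk_off.
Qed.

End BlockIndex.

Section BlockVectors.
Variable C : numClosedFieldType.
Variables L M d : nat.
Implicit Types (D : 'M[C]_(L, M * d)) (u v : 'cV[C]_(M * d)) (I : {set 'I_M}).

Lemma blkvB u v i : blkv (u - v) i = blkv u i - blkv v i.
Proof. by apply/matrixP => r b; rewrite !mxE. Qed.

Lemma subvB u v I : subv (u - v) I = subv u I - subv v I.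
Proof. by apply/matrixP => p b; rewrite !mxE. Qed.

Lemma blkv_notin_supp v i : i \notin supp v -> blkv v i = 0.
Proof. by rewrite inE negbK => /eqP. Qed.

Lemma supp_eq0 v : supp v = set0 -> v = 0.
Proof.
move=> v0; apply/matrixP => p b; rewrite !mxE (ord1 b) -[p]bidx_blk_off.
have := blkv_notin_supp (v := v) (i := blk_of p); rewrite v0 in_set0 => /(_ isT).
by move/matrixP/(_ (off_of p) 0); rewrite !mxE.
Qed.

Lemma mul_blocks D v : D *m v = \sum_i blkm D i *m blkv v i.
Proof.
apply/matrixP => a b; rewrite !mxE summxE sum_blocks (ord1 b).
by apply: eq_bigr => i _; rewrite !mxE; apply: eq_bigr => r _; rewrite !mxE.
Qed.

Lemma vnorm2_blocks v : vnorm2 v = \sum_i vnorm2 (blkv v i).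
Proof.
rewrite /vnorm2 sum_blocks; apply: eq_bigr => i _.
by apply: eq_bigr => r _; rewrite mxE.
Qed.

Lemma blkm_subm D I q : blkm (subm D I) q = blkm D (enum_val q).
Proof. by apply/matrixP => a r; rewrite !mxE blk_bidx off_bidx. Qed.

Lemma blkv_subv v I q : blkv (subv v I) q = blkv v (enum_val q).
Proof. by apply/matrixP => a r; rewrite !mxE blk_bidx off_bidx. Qed.

End BlockVectors.

Section SupportedVectors.
Variable C : numClosedFieldType.
Variables L M d : nat.
Variables (I : {set 'I_M}) (v : 'cV[C]_(M * d)).
Hypothesis v_out : forall i, i \notin I -> blkv v i = 0.

Lemma sum_supported (V : nmodType) (F : 'I_M -> 'cV[C]_d -> V) :
    (forall i, F i 0 = 0) ->
  \sum_i F i (blkv v i) = \sum_(q < #|I|) F (enum_val q) (blkv (subv v I) q).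
Proof.
move=> F0; rewrite (bigID (mem I)) /= [X in _ + X]big1 ?addr0; last first.
  by move=> i /v_out ->.
by rewrite big_enum_val; apply: eq_bigr => q _; rewrite blkv_subv.
Qed.

Lemma mul_subm (D : 'M[C]_(L, M * d)) : D *m v = subm D I *m subv v I.
Proof.
rewrite [LHS]mul_blocks (sum_supported (F := fun i z => blkm D i *m z)) => [|i].
  by rewrite mul_blocks; apply: eq_bigr => q _; rewrite blkm_subm.
exact: mulmx0.
Qed.

Lemma vnorm2_subv : vnorm2 v = vnorm2 (subv v I).
Proof.
rewrite !vnorm2_blocks (sum_supported (F := fun _ z => vnorm2 z)) // => i.
by rewrite /vnorm2 big1 // => r _; rewrite mxE normr0 expr0n.
Qed.

End SupportedVectors.

Section Dictionary.
Variable C : numClosedFieldType.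
Variables L M d : nat.
Variable D : 'M[C]_(L, M * d).
Hypothesis D_unit : forall j : 'I_(M * d), vnorm (col j D) = 1.

Local Notation nu := (subcoherence D).
Local Notation c := ((d.-1)%:R * nu).

Lemma subcoherence_ge0 : 0 <= nu.
Proof. by do 3 apply: bigmax_ge0 => ? _. Qed.

Lemma ip_col_le_subcoherence (l : 'I_M) (r s : 'I_d) : s != r ->
  `|ip (col (bidx l r) D) (col (bidx l s) D)| <= nu.
Proof.
move=> s_neq_r; rewrite /subcoherence /ip; apply: le_trans (le_bigmax_nneg _ (i := l) isT).
  apply: le_trans (le_bigmax_nneg _ (i := r) isT).
    by apply: (le_bigmax_nneg (P := fun j => j != r)) s_neq_r => ? _.
  by move=> ? _; apply: bigmax_ge0.
by move=> ? _; do 2 apply: bigmax_ge0 => ? _.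
Qed.

Lemma blkm_mul_cols (l : 'I_M) (z : 'cV[C]_d) :
  blkm D l *m z = \sum_r z r 0 *: col (bidx l r) D.
Proof.
apply/matrixP => a b; rewrite !mxE summxE (ord1 b).
by apply: eq_bigr => r _; rewrite !mxE mulrC.
Qed.

Lemma blk_gram (l : 'I_M) (z : 'cV[C]_d) :
  `|vnorm (blkm D l *m z) ^+ 2 - vnorm z ^+ 2| <= c * vnorm z ^+ 2.
Proof.
have gram_offdiag : vnorm (blkm D l *m z) ^+ 2 - vnorm z ^+ 2 =
    \sum_r \sum_(s | s != r)
      (z r 0)^* * z s 0 * ip (col (bidx l r) D) (col (bidx l s) D).
  rewrite -!ipvv blkm_mul_cols ip_suml ipE -sumrB; apply: eq_bigr => r _.
  rewrite ip_sumr (bigD1 r) //= ipZl ipZr ipvv D_unit expr1n mulr1 addrC addrK.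
  by apply: eq_bigr => s _; rewrite ipZl ipZr mulrA.
rewrite gram_offdiag; apply: le_trans (ler_norm_sum _ _ _) _.
apply: le_trans (_ : \sum_r \sum_(s | s != r) `|z r 0| * `|z s 0| * nu <= _).
  apply: ler_sum => r _; apply: le_trans (ler_norm_sum _ _ _) _.
  apply: ler_sum => s s_neq_r; rewrite !normrM norm_conjC.
  by rewrite ler_wpM2l ?mulr_ge0 // ip_col_le_subcoherence.
under eq_bigr do rewrite -mulr_suml.
rewrite -mulr_suml mulrAC ler_wpM2r ?subcoherence_ge0 //.
have := sum_cross_le (mem 'I_d) (fun r => normr_ge0 (z r 0)).
by rewrite card_ord vnorm_sqr.
Qed.

Lemma blk_vnorm_ge (l : 'I_M) (z : 'cV[C]_d) :
  (1 - c) * vnorm z ^+ 2 <= vnorm (blkm D l *m z) ^+ 2.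
Proof.
have := blk_gram l z.
rewrite real_lter_norml ?rpredB ?ger0_real ?exprn_ge0 ?vnorm_ge0 //.
case/andP => lower _; rewrite mulrBl mul1r lerBlDr addrC.
by move: lower; rewrite lerNl opprB lerBlDr.
Qed.

Lemma blk_vnorm_le (l : 'I_M) (z : 'cV[C]_d) :
  vnorm (blkm D l *m z) <= sqrtC (1 + c) * vnorm z.
Proof.
have c_ge0 : 0 <= c by rewrite mulr_ge0 ?ler0n ?subcoherence_ge0.
rewrite -ler_sqr ?nnegrE ?mulr_ge0 ?sqrtC_ge0 ?vnorm_ge0 ?addr_ge0 ?vnorm2_ge0 //.
rewrite exprMn [sqrtC (1 + c) ^+ 2]sqrtCK mulrDl mul1r -lerBlDl.
have := blk_gram l z.
rewrite real_lter_norml ?rpredB ?ger0_real ?exprn_ge0 ?vnorm_ge0 //.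
by case/andP.
Qed.

End Dictionary.

Lemma is_specnorm_ge0 (C : numClosedFieldType) m n (A : 'M[C]_(m, n)) a :
  (0 < n)%N -> is_specnorm A a -> 0 <= a.
Proof.
move=> n_gt0 [A_le _]; have one_gt0 : 0 < vnorm (const_mx 1 : 'cV[C]_n).
  rewrite sqrtC_gt0 /vnorm2 (eq_bigr (fun _ => 1)) => [|i _].
    by rewrite sumr_const card_ord ltr0n.
  by rewrite mxE normr1 expr1n.
by rewrite -(pmulr_lge0 _ one_gt0) (le_trans (vnorm_ge0 _) (A_le _)).
Qed.

Section BlockCoherence.
Variable C : numClosedFieldType.
Variables L M d : nat.
Variable D : 'M[C]_(L, M * d).
Hypothesis d_gt0 : (0 < d)%N.
Variable muB : C.
Hypothesis D_muB : block_coherence D muB.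

Lemma block_coherence_ge0 : 0 <= muB.
Proof.
have [nr [nr_spec ->]] := D_muB.
apply: bigmax_ge0 => i _; apply: bigmax_ge0 => j _.
by rewrite divr_ge0 ?ler0n // (is_specnorm_ge0 d_gt0 (nr_spec i j)).
Qed.

Lemma blk_cross_le (i j : 'I_M) (z : 'cV[C]_d) : j != i ->
  vnorm (adj (blkm D i) *m blkm D j *m z) <= d%:R * muB * vnorm z.
Proof.
move=> j_neq_i; have [nr [nr_spec muB_def]] := D_muB.
have nr_ge0 i' j' : 0 <= nr i' j' / d%:R.
  by rewrite divr_ge0 ?ler0n // (is_specnorm_ge0 d_gt0 (nr_spec i' j')).
apply: le_trans (proj1 (nr_spec i j) z) _; rewrite ler_wpM2r ?vnorm_ge0 //.
rewrite mulrC -ler_pdivrMr ?ltr0n // muB_def.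
apply: le_trans (le_bigmax_nneg _ (i := i) isT); last first.
  by move=> i' _; apply: bigmax_ge0 => j' _.
exact: (le_bigmax_nneg (P := fun j' => j' != i)).
Qed.

End BlockCoherence.

Section BlockGershgorin.
Variable C : numClosedFieldType.
Variables L n d : nat.
Variable B : 'M[C]_(L, n * d).
Variables c m : C.
Hypothesis blk_ge : forall l z, (1 - c) * vnorm z ^+ 2 <= vnorm (blkm B l *m z) ^+ 2.
Hypothesis cross_le : forall i j z, j != i ->
  vnorm (adj (blkm B i) *m blkm B j *m z) <= m * vnorm z.
Hypothesis m_ge0 : 0 <= m.

Lemma vnorm_mul_ge (v : 'cV[C]_(n * d)) :
  (1 - c - (n.-1)%:R * m) * vnorm v ^+ 2 <= vnorm (B *m v) ^+ 2.
Proof.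
set u := fun l => blkm B l *m blkv v l.
set N := \sum_l vnorm (blkv v l) ^+ 2.
set Sd := \sum_l vnorm (u l) ^+ 2.
set T := \sum_l \sum_(l' | l' != l) ip (u l) (u l').
have vN : vnorm v ^+ 2 = N.
  by rewrite vnorm_sqr vnorm2_blocks; apply: eq_bigr => l _; rewrite vnorm_sqr.
have BvST : vnorm (B *m v) ^+ 2 = Sd + T.
  rewrite -ipvv mul_blocks ip_suml -big_split; apply: eq_bigr => l _.
  by rewrite ip_sumr (bigD1 l) //= ipvv.
have Sd_ge : (1 - c) * N <= Sd.
  by rewrite mulr_sumr; apply: ler_sum => l _; apply: blk_ge.
have T_le : `|T| <= (n.-1)%:R * m * N.
  apply: le_trans (ler_norm_sum _ _ _) _.
  apply: le_trans (_ : \sum_l \sum_(l' | l' != l)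
      m * (vnorm (blkv v l) * vnorm (blkv v l')) <= _).
    apply: ler_sum => l _; apply: le_trans (ler_norm_sum _ _ _) _.
    apply: ler_sum => l' l'_neq_l; rewrite /u ip_adjl mulmxA.
    apply: le_trans (norm_ip_le _ _) _.
    by rewrite mulrCA ler_wpM2l ?vnorm_ge0 ?cross_le.
  under eq_bigr do rewrite -mulr_sumr.
  rewrite -mulr_sumr mulrAC [_ * m]mulrC ler_wpM2l //.
  have := sum_cross_le (mem 'I_n) (fun l => vnorm_ge0 (blkv v l)).
  by rewrite card_ord.
have T_real : T \is Num.real.
  have -> : T = vnorm (B *m v) ^+ 2 - Sd by rewrite BvST addrC addKr.
  rewrite rpredB ?ger0_real ?exprn_ge0 ?vnorm_ge0 ?sumr_ge0 // => l _.
  by rewrite exprn_ge0 ?vnorm_ge0.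
rewrite BvST vN mulrBl lerD // lerNl (le_trans _ T_le) //.
by rewrite -normrN real_ler_norm ?rpredN.
Qed.

End BlockGershgorin.

Section SupportNorms.
Variables (C : numClosedFieldType) (M d : nat) (x : 'cV[C]_(M * d)).

Lemma xmax_ge0 : 0 <= xmax x.
Proof. by apply: bigmax_ge0 => i _; apply: vnorm_ge0. Qed.

Lemma vnorm_blkv_le_xmax i : i \in supp x -> vnorm (blkv x i) <= xmax x.
Proof. by move=> iS; apply: le_bigmax_nneg => // j _; apply: vnorm_ge0. Qed.

Lemma xmin_ge0 : 0 <= xmin x.
Proof. by apply: bigmin_ge0 (xmax_ge0) => i _; apply: vnorm_ge0. Qed.

Lemma xmin_le_vnorm_blkv i : i \in supp x -> xmin x <= vnorm (blkv x i).
Proof.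
by move=> iS; apply: bigmin_le_nneg; rewrite ?xmax_ge0 // => j _; apply: vnorm_ge0.
Qed.

End SupportNorms.

Section BlockThresholding.
Variable C : numClosedFieldType.
Variables L M d k : nat.
Variable D : 'M[C]_(L, M * d).
Variables (x : 'cV[C]_(M * d)) (w y : 'cV[C]_L) (eps muB : C).
Hypothesis d_gt0 : (0 < d)%N.
Hypothesis D_unit : forall j : 'I_(M * d), vnorm (col j D) = 1.
Hypothesis D_muB : block_coherence D muB.
Hypothesis x_sparse : (#|supp x| <= k)%N.
Hypothesis x_neq0 : x != 0.
Hypothesis y_def : y = D *m x + w.
Hypothesis eps_gt0 : 0 < eps.
Hypothesis w_le : vnorm w <= eps.

Local Notation c := ((d.-1)%:R * subcoherence D).
Local Notation eta := (sqrtC (1 + c)).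
Local Notation m := (d%:R * muB * xmax x).

Hypothesis recovery_cond :
  2 * eps * eta + ((2 * k).-1)%:R * d%:R * muB * xmax x < (1 - c) * xmin x.

Lemma subm_vnorm_ge (I : {set 'I_M}) (z : 'cV[C]_(#|I| * d)) :
  (1 - c - (#|I|.-1)%:R * d%:R * muB) * vnorm z ^+ 2 <= vnorm (subm D I *m z) ^+ 2.
Proof.
rewrite -mulrA; apply: vnorm_mul_ge => [l z'|i j z' j_neq_i|].
- by rewrite blkm_subm; apply: blk_vnorm_ge.
- by rewrite !blkm_subm; apply: blk_cross_le; rewrite // (inj_eq enum_val_inj).
- by rewrite mulr_ge0 ?ler0n ?(block_coherence_ge0 d_gt0 D_muB).
Qed.

Lemma supp_nonempty : exists i0, i0 \in supp x.
Proof. by apply/set0Pn; apply: contraNneq x_neq0 => /supp_eq0 ->. Qed.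

Lemma sparsity_gt0 : (0 < k)%N.
Proof.
have [i0 i0S] := supp_nonempty.
by apply: leq_trans x_sparse; rewrite card_gt0; apply/set0Pn; exists i0.
Qed.

Lemma coherence_term_ge0 : 0 <= m.
Proof. by rewrite !mulr_ge0 ?ler0n ?(block_coherence_ge0 d_gt0 D_muB) ?xmax_ge0. Qed.

Lemma noise_ge0 : 0 <= eta * eps.
Proof.
by rewrite mulr_ge0 ?sqrtC_ge0 ?addr_ge0 ?mulr_ge0 ?ler0n ?subcoherence_ge0 ?ltW.
Qed.

(* The margin splits as (k - 1) cross terms and one noise term lost on the support,
   plus k cross terms and one noise term gained off it. *)
Lemma recovery_cond_split :
  (k.-1)%:R * m + eta * eps + (k%:R * m + eta * eps) < (1 - c) * xmin x.
Proof.
have k2 : (2 * k).-1 = (k.-1 + k)%N.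
  by case: k sparsity_gt0 => // k' _; rewrite mul2n doubleS addnS addnn.
by move: recovery_cond; rewrite k2 natrD; congr (_ < _); ring.
Qed.

Lemma one_sub_c_gt0 : 0 < 1 - c.
Proof.
apply: gt0_of_mul_gt0 (xmin_ge0 x) (le_lt_trans _ recovery_cond_split).
by rewrite !addr_ge0 ?noise_ge0 // mulr_ge0 ?ler0n ?coherence_term_ge0.
Qed.

Lemma corr_decomp j : adj (blkm D j) *m y =
  \sum_(l in supp x) adj (blkm D j) *m blkm D l *m blkv x l + adj (blkm D j) *m w.
Proof.
rewrite y_def mulmxDr mul_blocks mulmx_sumr (bigID (mem (supp x))) /=.
rewrite [X in _ + X + _]big1 ?addr0 => [|l /blkv_notin_supp ->]; last first.
  by rewrite !mulmx0.
by congr (_ + _); apply: eq_bigr => l _; rewrite mulmxA.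
Qed.

Lemma corr_noise_le j : vnorm (adj (blkm D j) *m w) <= eta * eps.
Proof.
apply: le_trans (adj_vnorm_le _ (blk_vnorm_le D_unit j) w) _.
  by rewrite sqrtC_ge0 addr_ge0 ?mulr_ge0 ?ler0n ?subcoherence_ge0.
by rewrite ler_wpM2l ?sqrtC_ge0 ?addr_ge0 ?mulr_ge0 ?ler0n ?subcoherence_ge0.
Qed.

Lemma corr_cross_le (S : {set 'I_M}) j : S \subset supp x -> j \notin S ->
  vnorm (\sum_(l in S) adj (blkm D j) *m blkm D l *m blkv x l) <= #|S|%:R * m.
Proof.
move=> S_sub jNS; have -> : #|S|%:R * m = \sum_(l in S) m.
  by rewrite sumr_const mulr_natl.
apply: le_trans (vnorm_sum_le _ _) _; apply: ler_sum => l lS.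
apply: le_trans (blk_cross_le d_gt0 D_muB _ _) _.
  by apply: contraNneq jNS => <-.
rewrite ler_wpM2l ?mulr_ge0 ?ler0n ?(block_coherence_ge0 d_gt0 D_muB) //.
exact: vnorm_blkv_le_xmax (subsetP S_sub l lS).
Qed.

Lemma corr_offsupp_le j : j \notin supp x ->
  vnorm (adj (blkm D j) *m y) <= k%:R * m + eta * eps.
Proof.
move=> jNS; rewrite corr_decomp; apply: le_trans (vnormD_le _ _) _.
apply: lerD (corr_noise_le j); apply: le_trans (corr_cross_le (subxx _) jNS) _.
by rewrite ler_wpM2r ?coherence_term_ge0 ?ler_nat.
Qed.

Lemma corr_supp_ge i : i \in supp x ->
  (1 - c) * xmin x - ((k.-1)%:R * m + eta * eps) <= vnorm (adj (blkm D i) *m y).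
Proof.
move=> iS; rewrite corr_decomp (big_setD1 _ iS) /= -addrA.
apply: le_trans (vnormD_ge _ _); apply: lerB.
  apply: le_trans (gram_vnorm_ge (blk_vnorm_ge D_unit i) _).
  by rewrite ler_wpM2l ?(ltW one_sub_c_gt0) ?xmin_le_vnorm_blkv.
apply: le_trans (vnormD_le _ _) _; apply: lerD (corr_noise_le i).
have iNSi : i \notin supp x :\ i by rewrite in_setD1 eqxx.
apply: le_trans (corr_cross_le (subsetDl _ _) iNSi) _.
rewrite ler_wpM2r ?coherence_term_ge0 // ler_nat -ltnS prednK ?sparsity_gt0 //.
by apply: leq_trans x_sparse; rewrite [#|supp x|](cardsD1 i) iS.
Qed.

Lemma corr_separation i j : i \in supp x -> j \notin supp x ->
  vnorm (adj (blkm D j) *m y) < vnorm (adj (blkm D i) *m y).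
Proof.
move=> iS jNS; apply: le_lt_trans (corr_offsupp_le jNS) (lt_le_trans _ (corr_supp_ge iS)).
by rewrite ltrBrDr addrC recovery_cond_split.
Qed.

Lemma bth_support (Shat : {set 'I_M}) : #|Shat| = k ->
  (forall i j, i \in Shat -> j \notin Shat ->
     vnorm (adj (blkm D j) *m y) <= vnorm (adj (blkm D i) *m y)) ->
  supp x \subset Shat.
Proof.
move=> Shat_card Shat_top.
apply: (top_set_subset (rho := fun i => vnorm (adj (blkm D i) *m y))) => //.
  by rewrite Shat_card.
exact: corr_separation.
Qed.

Lemma coherence_margin_gt0 : 0 < 1 - c - (k.-1)%:R * d%:R * muB.
Proof.
have [i0 i0S] := supp_nonempty.
apply: (gt0_of_mul_gt0 (xmin_ge0 x)); rewrite mulrBl subr_gt0.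
apply: le_lt_trans recovery_cond_split.
apply: le_trans (_ : (k.-1)%:R * m <= _); last first.
  by rewrite -addrA lerDl !addr_ge0 ?noise_ge0 // mulr_ge0 ?ler0n ?coherence_term_ge0.
rewrite !mulrA ler_wpM2l ?mulr_ge0 ?ler0n ?(block_coherence_ge0 d_gt0 D_muB) //.
exact: le_trans (xmin_le_vnorm_blkv i0S) (vnorm_blkv_le_xmax i0S).
Qed.

Lemma bth_error (Shat : {set 'I_M}) (P : 'M[C]_(#|Shat| * d, L)) (xhat : 'cV[C]_(M * d)) :
  #|Shat| = k -> \rank (subm D Shat) = (#|Shat| * d)%N -> is_pinv (subm D Shat) P ->
  subv xhat Shat = P *m y -> (forall i, i \notin Shat -> blkv xhat i = 0) ->
  supp x \subset Shat ->
  vnorm2 (xhat - x) <= eps ^+ 2 / (1 - c - (k.-1)%:R * d%:R * muB).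
Proof.
move=> Shat_card rkA pinvP xhat_S xhat_out S_sub.
have x_out i : i \notin Shat -> blkv x i = 0.
  by move=> iN; apply: blkv_notin_supp; exact: contra (subsetP S_sub i) iN.
have err : vnorm2 (xhat - x) = vnorm2 (P *m w).
  rewrite (vnorm2_subv (I := Shat)) => [|i iN]; last first.
    by rewrite blkvB xhat_out ?x_out ?subrr.
  rewrite subvB xhat_S y_def (mul_subm x_out D) mulmxDr mulmxA.
  by rewrite (is_pinv_mulmx_free pinvP rkA) mul1mx addrC addKr.
rewrite err ler_pdivlMr ?coherence_margin_gt0 // mulrC -vnorm_sqr -{1}Shat_card.
apply: le_trans (subm_vnorm_ge (P *m w)) _.
have [APA _ AP_herm _] := pinvP.
apply: le_trans (_ : vnorm w ^+ 2 <= _).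
  by rewrite mulmxA vnorm_proj_le // mulmxA APA.
by rewrite !expr2 ler_pM ?vnorm_ge0.
Qed.

End BlockThresholding.

Theorem theorem1 (C : numClosedFieldType) (L M d k : nat)
  (D : 'M[C]_(L, M * d)) (x : 'cV[C]_(M * d)) (w y : 'cV[C]_L) (eps muB : C) :
  (0 < d)%N -> (k <= M)%N -> (L < M * d)%N ->
  (forall j : 'I_(M * d), vnorm (col j D) = 1) ->
  (forall I : {set 'I_M}, (#|I| <= k)%N -> \rank (subm D I) = (#|I| * d)%N) ->
  block_coherence D muB ->
  (#|supp x| <= k)%N -> x != 0 ->
  y = D *m x + w -> 0 < eps -> vnorm w <= eps ->
  (1 - (d.-1)%:R * subcoherence D) * xmin x >
    2 * eps * sqrtC (1 + (d.-1)%:R * subcoherence D)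
    + ((2 * k).-1)%:R * d%:R * muB * xmax x ->
  forall (Shat : {set 'I_M}) (P : 'M[C]_(#|Shat| * d, L)) (xhat : 'cV[C]_(M * d)),
    #|Shat| = k ->
    (forall i j, i \in Shat -> j \notin Shat ->
       vnorm (adj (blkm D j) *m y) <= vnorm (adj (blkm D i) *m y)) ->
    is_pinv (subm D Shat) P ->
    subv xhat Shat = P *m y ->
    (forall i, i \notin Shat -> blkv xhat i = 0) ->
    supp x \subset Shat /\
    vnorm2 (xhat - x) <=
      eps ^+ 2 / (1 - (d.-1)%:R * subcoherence D - (k.-1)%:R * d%:R * muB).
Proof.
move=> d_gt0 _ _ D_unit D_rank D_muB x_sparse x_neq0 y_def eps_gt0 w_le cond.
move=> Shat P xhat Shat_card Shat_top pinvP xhat_S xhat_out.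
have S_sub := bth_support d_gt0 D_unit D_muB x_sparse x_neq0 y_def eps_gt0 w_le cond
  Shat_card Shat_top.
split=> //; apply: (bth_error d_gt0 D_unit D_muB x_sparse x_neq0 y_def eps_gt0 w_le cond
  Shat_card (D_rank Shat (eq_leq Shat_card)) pinvP xhat_S xhat_out S_sub).
Qed.
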